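(* For $\alpha,\alpha'\in\mathbb R/2\pi\mathbb Z$, the maps $\mathbb Z[i]\to\mathbb Z[i]$, $z\mapsto[ze^{i\alpha}]$ and $z\mapsto[ze^{i\alpha'}]$, are equal if and only if $\alpha=\alpha'$.
   Context: Identify $\mathbb Z^2$ with $\mathbb Z[i]$. For real $x$, $[x]=\lfloor x+\tfrac12\rfloor$, and for $w\in\mathbb C$, $[w]=[\Re w]+i[\Im w]$; the map $z\mapsto[ze^{i\alpha}]$ is the discretized rotation of angle $\alpha$. *)

From Stdlib Require Import Reals ZArith.
Open Scope R_scope.

(* [x] = floor (x + 1/2); Stdlib's Int_part r = up r - 1 is the floor of r. *)
Definition round_half (x : R) : Z := Int_part (x + / 2).

(* Z[i] identified with Z * Z: (a, b) <-> a + i b.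
   (a + i b) e^{i alpha} = (a cos alpha - b sin alpha) + i (a sin alpha + b cos alpha);
   the discretized rotation rounds both coordinates. *)
Definition drot (alpha : R) (z : Z * Z) : Z * Z :=
  let a := IZR (fst z) in
  let b := IZR (snd z) in
  (round_half (a * cos alpha - b * sin alpha),
   round_half (a * sin alpha + b * cos alpha)).

From Stdlib Require Import Reals ZArith Lra.
Open Scope R_scope.

(* The rotations agree on the real axis n + 0i, so for every integer n the
   rounded values of n cos alpha and n cos alpha' coincide, forcing
   |n (cos alpha - cos alpha')| < 1; letting n grow gives cos alpha = cos alpha',
   and likewise for sin.  Equal cosine and sine determine the angle mod 2 pi. *)

Lemma round_half_eq_close (x y : R) : round_half x = round_half y -> Rabs (x - y) < 1.
Proof.
  unfold round_half; intro Hxy.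
  destruct (base_Int_part (x + / 2)) as [Hx1 Hx2].
  destruct (base_Int_part (y + / 2)) as [Hy1 Hy2].
  rewrite Hxy in Hx1, Hx2; apply Rabs_def1; lra.
Qed.

Lemma eq0_of_IZR_mul_bounded (d : R) : (forall n : Z, Rabs (IZR n * d) < 1) -> d = 0.
Proof.
  intro Hsmall; destruct (Req_dec d 0) as [|Hd]; [assumption | exfalso].
  assert (Hpos : 0 < Rabs d) by (apply Rabs_pos_lt; assumption).
  assert (Hinv : 0 < / Rabs d) by (apply Rinv_0_lt_compat; assumption).
  destruct (archimed (/ Rabs d)) as [Hup _].
  specialize (Hsmall (up (/ Rabs d))).
  rewrite Rabs_mult, (Rabs_right (IZR _)) in Hsmall by lra.
  assert (Hgt : IZR (up (/ Rabs d)) * Rabs d > / Rabs d * Rabs d)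
    by (apply Rmult_gt_compat_r; lra).
  rewrite Rinv_l in Hgt by lra; lra.
Qed.

Lemma drot_real_axis_close (alpha alpha' : R) (n : Z) :
  drot alpha (n, 0%Z) = drot alpha' (n, 0%Z) ->
  Rabs (IZR n * (cos alpha - cos alpha')) < 1 /\
  Rabs (IZR n * (sin alpha - sin alpha')) < 1.
Proof.
  unfold drot; simpl; intros [= Hre Him].
  apply round_half_eq_close in Hre, Him.
  split.
  - replace (IZR n * (cos alpha - cos alpha'))
      with (IZR n * cos alpha - 0 * sin alpha - (IZR n * cos alpha' - 0 * sin alpha'))
      by ring; exact Hre.
  - replace (IZR n * (sin alpha - sin alpha'))
      with (IZR n * sin alpha + 0 * cos alpha - (IZR n * sin alpha' + 0 * cos alpha'))
      by ring; exact Him.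
Qed.

Lemma cos_sin_eq_period (alpha alpha' : R) :
  cos alpha = cos alpha' -> sin alpha = sin alpha' ->
  exists k : Z, alpha' = alpha + 2 * PI * IZR k.
Proof.
  intros Hc Hs.
  assert (Hcos : cos (2 * ((alpha' - alpha) / 2)) = 1).
  { replace (2 * ((alpha' - alpha) / 2)) with (alpha' - alpha) by field.
    rewrite cos_minus, <- Hc, <- Hs, Rplus_comm; exact (sin2_cos2 alpha). }
  rewrite cos_2a_sin in Hcos.
  assert (Hhalf : sin ((alpha' - alpha) / 2) = 0) by nra.
  destruct (sin_eq_0_0 _ Hhalf) as [k Hk]; exists k; lra.
Qed.

Lemma cos_sin_2PI_mul (k : Z) : cos (2 * PI * IZR k) = 1 /\ sin (2 * PI * IZR k) = 0.
Proof.
  assert (Hs : sin (IZR k * PI) = 0) by (apply sin_eq_0_1; eauto).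
  replace (2 * PI * IZR k) with (2 * (IZR k * PI)) by ring.
  rewrite cos_2a_sin, sin_2a, Hs; split; ring.
Qed.

Theorem mainTheorem9 (alpha alpha' : R) :
  (forall z : Z * Z, drot alpha z = drot alpha' z) <->
  (exists k : Z, alpha' = alpha + 2 * PI * IZR k).
Proof.
  split.
  - intro Hdrot; apply cos_sin_eq_period; apply Rminus_diag_uniq;
      apply eq0_of_IZR_mul_bounded; intro n;
      apply (drot_real_axis_close alpha alpha' n (Hdrot _)).
  - intros [k ->] [a b]; destruct (cos_sin_2PI_mul k) as [Hc Hs].
    unfold drot; rewrite cos_plus, sin_plus, Hc, Hs.
    f_equal; f_equal; ring.
Qed.
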